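(* Let $n=p'q$ where $p',q$ are distinct primes both at least $7$, let $A=L(n;p')$, and let $S=(x_1,x_2,x_3)$ be a sequence in $\mathbb{Z}_n$. Then $S$ is an $A$-extremal sequence for the Davenport constant if $S$ is equivalent with respect to $A$ to a sequence $(y_1,y_2,y_3)$ for which one of the following holds: (i) $y_1$ is the only term divisible by $q$, $y_1\neq 0$, and the image of $(y_2,y_3)$ under the natural map $g:\mathbb{Z}_n\to\mathbb{Z}_q$ is a $Q_q$-extremal sequence for the Davenport constant; (ii) $y_1$ is the only term coprime to $p'$, and the image of $(y_2,y_3)$ under $g$ is a $Q_q$-extremal sequence for the Davenport constant in $\mathbb{Z}_q$.
   Context: $\mathbb{Z}_m$ is the integers mod $m$, $U(m)$ its unit group; for a prime $q$, $Q_q=\{x^2: x\in U(q)\}$. For nonempty $A\subseteq\mathbb{Z}_m\setminus\{0\}$, a sequence $(x_1,\ldots,x_k)$ is an $A$-weighted zero-sum sequence if $\sum a_ix_i=0$ for some $a_i\in A$; $D_A(m)$ is the least $k$ such that every length-$k$ sequence in $\mathbb{Z}_m$ has a nonempty $A$-weighted zero-sum subsequence; an $A$-extremal sequence for the Davenport constant is a sequence of length $D_A(m)-1$ with no $A$-weighted zero-sum subsequence. For a multiplicative group $A$, $(x_1,\ldots,x_k)$ and $(y_1,\ldots,y_k)$ are equivalent with respect to $A$ if there are $a_i\in A$, a unit $c$ and a permutation $\sigma$ with $y_{\sigma(i)}=c\,a_ix_i$ for all $i$. For odd $m=\prod p_i^{r_i}$, prime $p\mid m$ and $a\in U(m)$,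 $\left(\frac{a}{p}\right)$ is the Legendre symbol of the image mod $p$, $\left(\frac{a}{m}\right)=\prod\left(\frac{a}{p_i}\right)^{r_i}$, and $L(m;p')=\{a\in U(m):\left(\frac{a}{m}\right)=\left(\frac{a}{p'}\right)\}$ for a prime $p'\mid m$. *)

From mathcomp Require Import all_boot all_order all_algebra all_fingroup.
Set Implicit Arguments. Unset Strict Implicit. Unset Printing Implicit Defensive.
Import GRing.Theory.
Local Open Scope ring_scope.

Definition weighted_zero_sum (R : comUnitRingType) (A : {pred R}) (s : seq R) : Prop :=
  exists w : seq R,
    [/\ size w = size s, all (fun a => a \in A) w & \sum_(i < size s) w`_i * s`_i = 0].

Definition has_wzs_subseq (R : comUnitRingType) (A : {pred R}) (s : seq R) : Prop :=
  exists t : seq R, [/\ subseq t s, t != [::] & weighted_zero_sum A t].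

Definition davenport_prop (R : comUnitRingType) (A : {pred R}) (k : nat) : Prop :=
  forall s : seq R, size s = k -> has_wzs_subseq A s.

Definition is_davenport_constant (R : comUnitRingType) (A : {pred R}) (k : nat) : Prop :=
  davenport_prop A k /\ forall j, (j < k)%N -> ~ davenport_prop A j.

Definition extremal (R : comUnitRingType) (A : {pred R}) (s : seq R) : Prop :=
  exists k, [/\ is_davenport_constant A k, size s = k.-1 & ~ has_wzs_subseq A s].

Definition equiv_wrt (R : comUnitRingType) (k : nat) (A : {pred R})
    (x y : k.-tuple R) : Prop :=
  exists (a : 'I_k -> R) (c : R) (sigma : 'S_k),
    [/\ forall i, a i \in A, c \is a GRing.unit &
        forall i, tnth y (sigma i) = c * a i * tnth x i].

Definition legendre (a p : nat) : int :=
  if (p %| a)%N then 0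
  else if [exists x : 'I_p, ((x * x) %% p == a %% p)%N] then 1 else -1.

Definition jacobi (a m : nat) : int :=
  \prod_(p <- primes m) legendre a p ^+ logn p m.

Definition L_set (m p' : nat) : {pred 'Z_m} :=
  [pred a : 'Z_m | (a \is a GRing.unit) && (jacobi a m == legendre a p')].

Definition Qset (q : nat) : {pred 'Z_q} :=
  [pred y : 'Z_q | [exists x : 'Z_q, (x \is a GRing.unit) && (y == x ^+ 2)]].

Definition redmod (n q : nat) (x : 'Z_n) : 'Z_q := (x : nat)%:R.
Arguments L_set : clear implicits.
Arguments Qset : clear implicits.
Arguments redmod : clear implicits.

(* Write L for L(p'q; p') and g for reduction modulo q. A unit of Z_(p'q) lies in L
   exactly when its reduction modulo q is a square, so by the Chinese remainder theorem
   a sequence has an L-weighted zero sum on an index set T iff, on the same T, it has a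
   zero sum with unit weights modulo p' and one with weights in Q_q modulo q. Modulo p'
   this is possible unless T contains exactly one term that is nonzero modulo p' (as
   p' > 4, the weight -(k - 1) balancing k nonzero terms is a unit). Extremality of
   (g y2, g y3) gives D_{Q_q}(q) = 3, and a case analysis on where the four terms vanish
   modulo p' and q, using that a product of two non-squares modulo q is a square, finds
   such a T in every sequence of length 4; hence D_L(p'q) <= 4.
   Conversely, reduction modulo q turns an L-weighted zero sum of (y1, y2, y3) that
   involves y2 or y3 into a Q_q-weighted one of (g y2, g y3). In case (i) a zero sum of
   y1 alone forces y1 = 0; in case (ii) reduction modulo p' shows that y1 is not
   involved. Equivalence with respect to L preserves weighted zero sums. *)

From HB Require Import structures.
From mathcomp Require Import all_boot all_order all_algebra all_fingroup all_solvable.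
From mathcomp Require Import zify ring.
Set Implicit Arguments. Unset Strict Implicit. Unset Printing Implicit Defensive.
Import GRing.Theory.
Local Open Scope ring_scope.

Section WeightedZeroSums.
Variables (R : comUnitRingType) (A : {pred R}).

Let wsum (w s : seq R) := \sum_(i < size s) w`_i * s`_i.

Let wsum_cons w x s : wsum w (x :: s) = w`_0 * x + wsum (behead w) s.
Proof.
by rewrite /wsum big_ord_recl; congr (_ + _); apply: eq_bigr => i _; rewrite nth_behead.
Qed.

Let wsum_nil w : wsum w [::] = 0.
Proof. by rewrite /wsum big_ord0. Qed.

Let A0 := [pred a : R | (a \in A) || (a == 0)].

Fixpoint zero_pad (m : bitseq) (w : seq R) : seq R :=
  if m is b :: m' then
    if b then head 0 w :: zero_pad m' (behead w) else 0 :: zero_pad m' w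
  else [::].

Let size_zero_pad m w : size (zero_pad m w) = size m.
Proof. by elim: m w => //= b m IHm w; case: b => /=; rewrite IHm. Qed.

Let wsum_zero_pad m w s : size m = size s -> wsum (zero_pad m w) s = wsum w (mask m s).
Proof.
elim: m w s => [|b m IHm] w [|x s] //= => [_ | [size_ms]]; first by rewrite !wsum_nil.
case: b; rewrite !wsum_cons IHm //=.
by rewrite mul0r add0r.
Qed.

Let all_zero_pad m w : all (mem A) w -> all A0 (zero_pad m w).
Proof.
elim: m w => //= b m IHm w Aw; case: b => /=; last by rewrite eqxx orbT IHm.
by case: w Aw => [|a w] /=; [rewrite eqxx orbT IHm | case/andP=> -> /IHm ->].
Qed.

Let mem_zero_pad m w : (size w <= count id m)%N -> {subset w <= zero_pad m w}.
Proof.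
elim: m w => [|b m IHm] w /=; first by case: w.
case: b => /= [|size_w a w_a]; last by rewrite inE IHm ?orbT.
case: w => // a w /= size_w c; rewrite !inE => /orP[-> // | w_c].
by rewrite IHm ?orbT.
Qed.

Let wsum_mask_A w s : size w = size s -> all A0 w ->
  wsum (mask (map (mem A) w) w) (mask (map (mem A) w) s) = wsum w s.
Proof.
elim: w s => [|a w IHw] [|x s] //= [size_ws] /andP[A0a A0w].
case: (boolP (a \in A)) => Aa /=; rewrite !wsum_cons /= IHw //.
by move: A0a; rewrite /= (negbTE Aa) => /eqP ->; rewrite mul0r add0r.
Qed.

Let has_wzs_subseq_weights s : has_wzs_subseq A s <->
  exists w, [/\ size w = size s, all A0 w, has (mem A) w & wsum w s = 0].
Proof.
split=> [[_ [/subseqP[m size_m ->] nz [w [size_w Aw sum_w]]]] | [w [size_w A0w Aw sum_w]]].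
  exists (zero_pad m w); split; rewrite ?size_zero_pad ?all_zero_pad ?wsum_zero_pad //.
  apply/hasP; case: w size_w Aw {sum_w} => [/esym/eqP | a w size_w /andP[Aa _]].
    by rewrite size_eq0 (negbTE nz).
  by exists a; rewrite // mem_zero_pad ?mem_head // size_w size_mask.
exists (mask (map (mem A) w) s); split; first exact: mask_subseq.
  by rewrite -size_eq0 size_mask ?size_map // count_map -lt0n -has_count.
exists (mask (map (mem A) w) w); split.
- by rewrite !size_mask ?size_map.
- by elim: (w) => //= a w' IHw; case: (boolP (a \in A)) => Aa //=; rewrite Aa.
- exact: etrans (wsum_mask_A size_w A0w) sum_w.
Qed.

Definition wzs_on (I : finType) (v : I -> R) (T : {set I}) : Prop :=
  exists w : I -> R, [/\ {in T, forall i, w i \in A}, {in ~: T, forall i, w i = 0}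
    & \sum_i w i * v i = 0].

Lemma has_wzs_subseq_tupleP k (t : k.-tuple R) :
  has_wzs_subseq A t <-> exists2 T : {set 'I_k}, T != set0 & wzs_on (tnth t) T.
Proof.
have wsum_tnth w : wsum w t = \sum_(i < k) w`_i * tnth t i.
  by rewrite /wsum size_tuple; apply: eq_bigr => i _; rewrite (tnth_nth 0).
split=> [/has_wzs_subseq_weights[w [size_w A0w Aw sum_w]] | [T nzT [w [Aw w0 sum_w]]]].
  rewrite size_tuple in size_w; exists [set i : 'I_k | w`_i \in A].
    case/(has_nthP 0): Aw => i; rewrite size_w => lt_ik Awi.
    by apply/set0Pn; exists (Ordinal lt_ik); rewrite inE.
  exists (fun i : 'I_k => w`_i); split; first by move=> i; rewrite inE.
    move=> i; rewrite !inE => /negbTE nAwi.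
    by have /(all_nthP 0)/(_ i) := A0w; rewrite size_w ltn_ord /= nAwi => /(_ isT)/eqP.
  by rewrite -wsum_tnth.
apply/has_wzs_subseq_weights; exists [tuple w i | i < k].
have nth_w (i : 'I_k) : [tuple w i | i < k]`_i = w i by rewrite -tnth_nth tnth_mktuple.
split; rewrite ?size_tuple //.
- apply/(all_nthP 0) => i; rewrite size_tuple => lt_ik; rewrite (nth_w (Ordinal lt_ik)) inE.
  case: (boolP (Ordinal lt_ik \in T)) => [/Aw -> // | nT].
  by rewrite w0 ?inE // eqxx orbT.
- case/set0Pn: nzT => i Ti; apply/(has_nthP 0); exists i; rewrite ?size_tuple //.
  by rewrite inE nth_w Aw.
- by rewrite wsum_tnth -[RHS]sum_w; apply: eq_bigr => i _; rewrite nth_w.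
Qed.

Section WzsOn.
Variable I : finType.
Implicit Types (v : I -> R) (T : {set I}).

Lemma eq_wzs_on v v' T : v =1 v' -> wzs_on v T -> wzs_on v' T.
Proof.
move=> eq_v [w [Aw w0 sum_w]]; exists w; split=> //.
by rewrite -[RHS]sum_w; apply: eq_bigr => i _; rewrite eq_v.
Qed.

Lemma wzs_onU v T1 T2 :
  [disjoint T1 & T2] -> wzs_on v T1 -> wzs_on v T2 -> wzs_on v (T1 :|: T2).
Proof.
move=> T12 [w1 [Aw1 w10 sum_w1]] [w2 [Aw2 w20 sum_w2]].
exists (fun i => w1 i + w2 i); split.
- move=> i; rewrite inE => /orP[T1i | T2i].
    by rewrite w20 ?addr0 ?Aw1 // inE (disjointFr T12 T1i).
  by rewrite w10 ?add0r ?Aw2 // inE (disjointFl T12 T2i).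
- by move=> i; rewrite !inE negb_or => /andP[nT1i nT2i]; rewrite w10 ?w20 ?addr0 ?inE.
- by under eq_bigr do rewrite mulrDl; rewrite big_split /= sum_w1 sum_w2 addr0.
Qed.

Lemma wzs_on_setD1 v T i : v i = 0 -> wzs_on v T -> wzs_on v (T :\ i).
Proof.
move=> vi0 [w [Aw w0 sum_w]]; exists (fun j => if j == i then 0 else w j); split.
- by move=> j; rewrite !inE => /andP[/negbTE -> /Aw].
- move=> j; rewrite !inE negb_and negbK; case: eqP => //= _ nTj.
  by rewrite w0 ?inE.
- rewrite -[RHS]sum_w [RHS](bigD1 i) //= vi0 mulr0 add0r (bigD1 i) //= eqxx mul0r add0r.
  by apply: eq_bigr => j /negbTE ->.
Qed.

Lemma wzs_on_zero v T : 1 \in A -> {in T, forall i, v i = 0} -> wzs_on v T.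
Proof.
move=> A1 vT0; exists (fun i => if i \in T then 1 else 0); split.
- by move=> i ->.
- by move=> i; rewrite inE => /negbTE ->.
- by apply: big1 => i _; case: ifPn => [/vT0 -> | _]; rewrite ?mulr0 ?mul0r.
Qed.

Lemma wzs_on_eq0 v T i : {subset A <= GRing.unit} -> wzs_on v T -> i \in T ->
  {in T :\ i, forall j, v j = 0} -> v i = 0.
Proof.
move=> Aunit [w [Aw w0 sum_w]] Ti vT0.
apply: (mulrI (Aunit _ (Aw _ Ti))); rewrite mulr0 -[RHS]sum_w (bigD1 i) //=.
rewrite big1 ?addr0 // => j nji; case: (boolP (j \in T)) => Tj.
  by rewrite vT0 ?mulr0 // !inE nji.
by rewrite w0 ?mul0r // inE.
Qed.

Lemma wzs_on_imset (J : finType) (f : J -> I) v (T : {set J}) :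
  injective f -> wzs_on (v \o f) T -> wzs_on v (f @: T).
Proof.
move=> inj_f [w [Aw w0 sum_w]].
have wf j : \sum_(j' | f j' == f j) w j' = w j.
  by rewrite (eq_bigl (pred1 j)) ?big_pred1_eq // => j'; rewrite /= inj_eq.
exists (fun i => \sum_(j | f j == i) w j); split.
- by move=> _ /imsetP[j Tj ->]; rewrite wf Aw.
- move=> i; rewrite inE => nTi; apply: big1 => j /eqP fj; rewrite w0 // inE.
  by apply: contra nTi => Tj; rewrite -fj imset_f.
- rewrite -[RHS]sum_w (partition_big f xpredT) //=; apply: eq_bigr => i _.
  by rewrite mulr_suml; apply: eq_bigr => j /eqP <-.
Qed.

Lemma wzs_on_preimset (J : finType) (f : J -> I) v T :
  injective f -> T \subset f @: setT -> wzs_on v T -> wzs_on (v \o f) (f @^-1: T).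
Proof.
move=> inj_f sT [w [Aw w0 sum_w]]; exists (w \o f); split.
- by move=> j; rewrite inE => /Aw.
- by move=> j; rewrite !inE => nTj; apply: w0; rewrite inE.
- rewrite -[RHS]sum_w (partition_big f xpredT) //=; apply: eq_bigr => i _.
  rewrite (eq_bigr (fun=> w i * v i)) => [|j /eqP <- //].
  case: (boolP (i \in T)) => [/(subsetP sT)/imsetP[j _ ->] | nTi].
    by rewrite (eq_bigl (pred1 j)) ?big_pred1_eq // => j'; rewrite /= inj_eq.
  by rewrite w0 ?mul0r ?inE // big1.
Qed.

End WzsOn.

Lemma davenport_wzs_on (I : finType) k (v : I -> R) (X : {set I}) :
  davenport_prop A k -> (k <= #|X|)%N ->
  exists2 T : {set I}, T \subset X & T != set0 /\ wzs_on v T.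
Proof.
move=> Dk le_kX; pose f (j : 'I_k) := enum_val (widen_ord le_kX j).
have inj_f : injective f by move=> j j' /enum_val_inj[] /val_inj.
have [T nzT] := (has_wzs_subseq_tupleP [tuple v (f j) | j < k]).1 (Dk _ (size_tuple _)).
move=> /(eq_wzs_on (v' := v \o f) (tnth_mktuple _))/(wzs_on_imset inj_f) wzs_fT.
exists (f @: T); last by rewrite imset_eq0.
by apply/subsetP => _ /imsetP[j _ ->]; apply: enum_valP.
Qed.

Lemma equiv_wrt_has_wzs k (x y : k.-tuple R) :
  {subset A <= GRing.unit} -> {in A &, forall a b, a / b \in A} ->
  equiv_wrt A x y -> has_wzs_subseq A x -> has_wzs_subseq A y.
Proof.
move=> Aunit Adiv [a [c [s [Aa uc yE]]]] /has_wzs_subseq_tupleP[T nzT [w [Aw w0 sum_w]]].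
apply/has_wzs_subseq_tupleP; exists ((s^-1)%g @^-1: T).
  by case/set0Pn: nzT => i Ti; apply/set0Pn; exists (s i); rewrite inE permK.
exists (fun j => w ((s^-1)%g j) / a ((s^-1)%g j)); split.
- by move=> j; rewrite inE => Tj; rewrite Adiv ?Aw.
- by move=> j; rewrite !inE => nTj; rewrite w0 ?mul0r // inE.
- rewrite (reindex_inj (@perm_inj _ s)) /=.
  transitivity (c * \sum_i w i * tnth x i); last by rewrite sum_w mulr0.
  rewrite mulr_sumr; apply: eq_bigr => i _; rewrite permK yE.
  transitivity (w i * ((a i)^-1 * a i) * (c * tnth x i)); first by ring.
  by rewrite mulVr ?Aunit // mulr1 mulrCA.
Qed.

Lemma ord3_neq0 (j : 'I_3) : j != ord0 -> j = inord 1 \/ j = inord 2.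
Proof.
by case: j => -[|[|[|]]] // lt_j3 _; [left | right]; apply: val_inj; rewrite /= inordK.
Qed.

Lemma wzs_on_tail (v : 'I_3 -> R) T : T != set0 -> ord0 \notin T -> wzs_on v T ->
  has_wzs_subseq A [:: v (inord 1); v (inord 2)].
Proof.
move=> nzT T0; pose f (j : 'I_2) : 'I_3 := inord j.+1.
have inj_f : injective f.
  move=> j j' /(congr1 (@nat_of_ord 3)).
  by rewrite /f !inordK ?ltnS ?leq_ord // => -[] /val_inj.
have sub_f : T \subset f @: setT.
  apply/subsetP => j Tj; apply/imsetP.
  have nz_j : j != ord0 by apply: contraNneq T0 => <-.
  by case: (ord3_neq0 nz_j) => ->; [exists ord0 | exists ord_max].
move=> /(wzs_on_preimset inj_f sub_f) wzs_f.
apply/(has_wzs_subseq_tupleP [tuple _; _]); exists (f @^-1: T).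
  case/set0Pn: nzT => j Tj; have /imsetP[k _ jE] := subsetP sub_f j Tj.
  by apply/set0Pn; exists k; rewrite inE -jE.
by apply: eq_wzs_on wzs_f => -[[|[|]]].
Qed.

Lemma extremal_davenport (s : seq R) : extremal A s -> davenport_prop A (size s).+1.
Proof.
case=> [[|k] [[Dk _] -> _]] //.
by case: (Dk [::] erefl) => t []; rewrite subseq0 => /eqP ->; rewrite eqxx.
Qed.

Lemma davenport_extremal k (s : seq R) :
  davenport_prop A k.+1 -> size s = k -> ~ has_wzs_subseq A s -> extremal A s.
Proof.
move=> Dk size_s no_wzs; exists k.+1; split=> //; split=> // j lt_jk Dj.
have le_js : (j <= size s)%N by rewrite size_s.
apply: no_wzs; have [t [sub_t nz_t wzs_t]] := Dj (take j s) (size_takel le_js).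
by exists t; split=> //; apply: subseq_trans sub_t (take_subseq _ _).
Qed.

End WeightedZeroSums.

Section ZpNat.
Variable m : nat.
Hypothesis m_gt1 : (1 < m)%N.

Lemma ltn_Zp (x : 'Z_m) : (x < m)%N.
Proof. by rewrite -[m in (_ < m)%N](Zp_cast m_gt1). Qed.

Lemma Zp_natK (x : 'Z_m) : (x : nat)%:R = x.
Proof. by apply: val_inj; rewrite /= val_Zp_nat // modn_small // ltn_Zp. Qed.

Lemma Zp_eq0 (x : 'Z_m) : (x == 0) = (m %| x)%N.
Proof.
apply/eqP/idP => [->|]; first exact: dvdn0.
by rewrite /dvdn modn_small ?ltn_Zp // => /eqP x0; apply: val_inj.
Qed.

End ZpNat.

Section Reduction.
Variables m d : nat.
Hypotheses (m_gt1 : (1 < m)%N) (d_gt1 : (1 < d)%N) (d_dvd_m : (d %| m)%N).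

Lemma redmod_nat k : redmod m d k%:R = k%:R.
Proof. by apply: val_inj; rewrite /redmod /= !val_Zp_nat // modn_dvdm. Qed.

Lemma redmodD x y : redmod m d (x + y) = redmod m d x + redmod m d y.
Proof. by rewrite -(Zp_natK m_gt1 x) -(Zp_natK m_gt1 y) -natrD !redmod_nat natrD. Qed.

Lemma redmodM x y : redmod m d (x * y) = redmod m d x * redmod m d y.
Proof. by rewrite -(Zp_natK m_gt1 x) -(Zp_natK m_gt1 y) -natrM !redmod_nat natrM. Qed.

Lemma redmod0 : redmod m d 0 = 0.
Proof. exact: (redmod_nat 0). Qed.

Lemma redmod1 : redmod m d 1 = 1.
Proof. exact: (redmod_nat 1). Qed.

Lemma redmod_sum (I : Type) (r : seq I) (P : pred I) (F : I -> 'Z_m) :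
  redmod m d (\sum_(i <- r | P i) F i) = \sum_(i <- r | P i) redmod m d (F i).
Proof. exact: (big_morph _ redmodD redmod0). Qed.

Lemma redmod_eq0 x : (redmod m d x == 0) = (d %| x)%N.
Proof. by rewrite Zp_eq0 // val_Zp_nat // /dvdn modn_mod. Qed.

Lemma redmod_unit x : x \is a GRing.unit -> redmod m d x \is a GRing.unit.
Proof.
case/unitrP=> y [yx xy]; apply/unitrP; exists (redmod m d y).
by rewrite -!redmodM yx xy redmod1.
Qed.

Lemma wzs_on_redmod (I : finType) (A : {pred 'Z_m}) (B : {pred 'Z_d}) (t : I -> 'Z_m) T :
  {in A, forall a, redmod m d a \in B} -> wzs_on A t T -> wzs_on B (redmod m d \o t) T.
Proof.
move=> AB [w [Aw w0 sum_w]]; exists (redmod m d \o w); split.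
- by move=> i /Aw /AB.
- by move=> i /w0 /= ->; rewrite redmod0.
- transitivity (redmod m d (\sum_i w i * t i)); last by rewrite sum_w redmod0.
  by rewrite redmod_sum; apply: eq_bigr => i _; rewrite redmodM.
Qed.

Lemma redmodV x : x \is a GRing.unit -> redmod m d x^-1 = (redmod m d x)^-1.
Proof.
move=> ux; apply: (mulrI (redmod_unit ux)).
by rewrite -redmodM !divrr ?redmod1 ?redmod_unit.
Qed.

End Reduction.

Section Chinese.
Variables a b : nat.
Hypotheses (a_gt1 : (1 < a)%N) (b_gt1 : (1 < b)%N) (co_ab : coprime a b).

Let ab_gt1 : (1 < a * b)%N.
Proof. by rewrite (leq_trans a_gt1) // leq_pmulr // ltnW. Qed.
Let a_dvd_ab : (a %| a * b)%N. Proof. exact: dvdn_mulr. Qed.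
Let b_dvd_ab : (b %| a * b)%N. Proof. exact: dvdn_mull. Qed.

Definition crt (x : 'Z_a) (y : 'Z_b) : 'Z_(a * b) := (chinese a b x y)%:R.

Lemma redmod_crtl x y : redmod (a * b) a (crt x y) = x.
Proof.
by rewrite redmod_nat // -(Zp_nat_mod a_gt1) chinese_modl // Zp_nat_mod // Zp_natK.
Qed.

Lemma redmod_crtr x y : redmod (a * b) b (crt x y) = y.
Proof.
by rewrite redmod_nat // -(Zp_nat_mod b_gt1) chinese_modr // Zp_nat_mod // Zp_natK.
Qed.

Lemma redmod_eq0_crt (z : 'Z_(a * b)) :
  redmod (a * b) a z = 0 -> redmod (a * b) b z = 0 -> z = 0.
Proof.
move=> /eqP za /eqP zb; apply/eqP; rewrite Zp_eq0 // Gauss_dvd //.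
by rewrite -(redmod_eq0 a_gt1) -(redmod_eq0 b_gt1) za.
Qed.

Lemma redmod_unit_crt (z : 'Z_(a * b)) :
  redmod (a * b) a z \is a GRing.unit -> redmod (a * b) b z \is a GRing.unit ->
  z \is a GRing.unit.
Proof.
rewrite /redmod !unitZpE // => co_a co_b.
by rewrite -(Zp_natK ab_gt1 z) unitZpE // coprimeMl co_a co_b.
Qed.

Lemma wzs_on_crt (I : finType) (A : {pred 'Z_(a * b)}) (Aa : {pred 'Z_a}) (Ab : {pred 'Z_b})
    (t : I -> 'Z_(a * b)) T :
  (forall z, redmod (a * b) a z \in Aa -> redmod (a * b) b z \in Ab -> z \in A) ->
  wzs_on Aa (redmod (a * b) a \o t) T -> wzs_on Ab (redmod (a * b) b \o t) T ->
  wzs_on A t T.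
Proof.
move=> A_crt [wa [Awa wa0 sum_wa]] [wb [Awb wb0 sum_wb]].
exists (fun i => crt (wa i) (wb i)); split.
- by move=> i Ti; apply: A_crt; rewrite ?redmod_crtl ?redmod_crtr ?Awa ?Awb.
- by move=> i nTi; apply: redmod_eq0_crt; rewrite ?redmod_crtl ?redmod_crtr ?wa0 ?wb0.
- apply: redmod_eq0_crt; rewrite redmod_sum //; [rewrite -[RHS]sum_wa | rewrite -[RHS]sum_wb];
    by apply: eq_bigr => i _; rewrite redmodM ?redmod_crtl ?redmod_crtr.
Qed.

End Chinese.

Lemma QsetP q (x : 'Z_q) :
  reflect (exists2 s, s \is a GRing.unit & x = s ^+ 2) (x \in Qset q).
Proof.
apply: (iffP existsP) => [[s /andP [us /eqP ->]]|[s us ->]]; first by exists s.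
by exists s; rewrite us eqxx.
Qed.

Lemma Qset_divr_closed q : divr_closed (Qset q).
Proof.
split=> [|_ _ /QsetP[s us ->] /QsetP[t ut ->]]; apply/QsetP.
  by exists 1; rewrite ?unitr1 ?expr1n.
by exists (s / t); rewrite ?unitrM ?us ?unitrV // exprMn exprVn.
Qed.

HB.instance Definition _ q := GRing.isDivClosed.Build _ (Qset q) (Qset_divr_closed q).

Lemma Qset_unit q (x : 'Z_q) : x \in Qset q -> x \is a GRing.unit.
Proof. by case/QsetP=> s us ->; rewrite unitrX. Qed.

Lemma Qset_sqr q (s : 'Z_q) : s \is a GRing.unit -> s ^+ 2 \in Qset q.
Proof. by move=> us; apply/QsetP; exists s. Qed.

Section SquaresModPrime.
Variable q : nat.
Hypothesis q_prime : prime q.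

Let q_gt1 : (1 < q)%N. Proof. exact: prime_gt1. Qed.

Lemma Zp_prime_unitE (x : 'Z_q) : (x \is a GRing.unit) = (x != 0).
Proof. by rewrite Zp_eq0 // -[x in LHS](Zp_natK q_gt1) unitZpE // prime_coprime. Qed.

Lemma Qset_nonsqM (x y : 'Z_q) : x \is a GRing.unit -> y \is a GRing.unit ->
  x \notin Qset q -> y \notin Qset q -> x * y \in Qset q.
Proof.
have /cyclicP [g gen] := units_Zp_cyclic q_prime.
have ug : val g \is a GRing.unit := valP g.
have sq_or_g z (uz : z \is a GRing.unit) :
    z \in Qset q \/ exists2 s, s \in Qset q & z = val g * s.
  have /cycleP [k kz] : FinRing.Unit uz \in <[g]>%g by rewrite -gen inE.
  have {kz} -> : z = val g ^+ k by rewrite -FinRing.val_unitX -kz.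
  rewrite -(odd_double_half k) exprD -muln2 exprM.
  case: (odd k); [right | left]; last by rewrite mul1r Qset_sqr ?unitrX.
  by exists ((val g ^+ k./2) ^+ 2); rewrite ?Qset_sqr ?unitrX.
move=> ux uy /negbTE nx /negbTE ny.
case: (sq_or_g x ux) => [|[s Qs ->]]; first by rewrite nx.
case: (sq_or_g y uy) => [|[t Qt ->]]; first by rewrite ny.
by rewrite mulrACA (rpredM _ (rpredM Qs Qt)) // -expr2 Qset_sqr.
Qed.

Lemma oppM_Qset_cases (a b c d : 'Z_q) : b != 0 ->
  - (a * c) \in Qset q -> - (a * d) \in Qset q -> - (c * d) \notin Qset q ->
  - (b * c) \in Qset q \/ - (a * b) \in Qset q.
Proof.
move=> nz_b Qac Qad nQcd.
have ua : a \is a GRing.unit.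
  by have := Qset_unit Qac; rewrite unitrN unitrM => /andP[].
have ub : b \is a GRing.unit by rewrite Zp_prime_unitE.
have Qa2 := Qset_sqr ua; have ua2 := unitrX 2 ua.
have Qcd : c * d \in Qset q.
  rewrite -(rpredMl (c * d) Qa2 ua2).
  have -> : a ^+ 2 * (c * d) = - (a * c) * - (a * d) by ring.
  exact: rpredM.
have nQm1 : -1 \notin Qset q.
  by apply: contra nQcd => Qm1; rewrite -mulN1r rpredM.
case Qbc: (- (b * c) \in Qset q); [by left | right].
have nQab : a * b \notin Qset q.
  apply: contraFN Qbc => Qab; rewrite -(rpredMl _ Qa2 ua2).
  have -> : a ^+ 2 * - (b * c) = - (a * c) * (a * b) by ring.
  exact: rpredM.
by rewrite -mulN1r Qset_nonsqM ?unitrN ?unitr1 ?unitrM ?ua ?ub.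
Qed.

Lemma wzs_on_pair_Qset (I : finType) (v : I -> 'Z_q) i j :
  i != j -> v i != 0 -> v j != 0 ->
  wzs_on (Qset q) v [set i; j] <-> - (v i * v j) \in Qset q.
Proof.
move=> ij nz_vi nz_vj; have uvi : v i \is a GRing.unit by rewrite Zp_prime_unitE.
have uvj : v j \is a GRing.unit by rewrite Zp_prime_unitE.
have sum2 (w : I -> 'Z_q) : {in ~: [set i; j], forall k, w k = 0} ->
    \sum_k w k * v k = w i * v i + w j * v j.
  move=> w0; rewrite (bigD1 i) // (bigD1 j) 1?eq_sym //= addrA big1 ?addr0 // => k.
  by case/andP=> ki kj; rewrite w0 ?mul0r // !inE negb_or ki.
split=> [[w [Qw w0]] | Qij].
  rewrite sum2 // => sum_w; have Qwi : w i \in Qset q by rewrite Qw ?set21.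
  rewrite -(rpredMl _ Qwi (Qset_unit Qwi)).
  have -> : w i * - (v i * v j) = w j * v j ^+ 2 - v j * (w i * v i + w j * v j) by ring.
  by rewrite sum_w mulr0 subr0 rpredM ?Qset_sqr ?Qw ?set22.
exists (fun k => if k == i then - (v i * v j) else if k == j then v i ^+ 2 else 0); split.
- by move=> k /set2P[] ->; rewrite ?eqxx // eq_sym (negbTE ij) Qset_sqr.
- by move=> k; rewrite !inE negb_or => /andP[/negbTE -> /negbTE ->].
- rewrite sum2 => [|k]; last by rewrite !inE negb_or => /andP[/negbTE -> /negbTE ->].
  by rewrite !eqxx eq_sym (negbTE ij); ring.
Qed.

End SquaresModPrime.

Lemma wzs_on_units_Zp p (I : finType) (u : I -> 'Z_p) (T : {set I}) : prime p ->
  (#|T| <= p)%N -> #|T :&: [set i | u i != 0]| != 1%N -> wzs_on GRing.unit u T.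
Proof.
move=> p_prime T_le_p; set N := [set i | u i != 0]; set M := T :&: N => M_neq1.
have M_le_p : (#|M| <= p)%N by apply: leq_trans (subset_leq_card (subsetIl T N)) T_le_p.
rewrite -(setID T N) -/M; apply: wzs_onU.
- by rewrite disjoints_subset; apply/subsetP => i /setIP[_]; rewrite !inE => ->.
- have [-> | [i0 Mi0]] := set_0Vmem M.
    by apply: wzs_on_zero => [|i]; rewrite ?unitr1 ?inE.
  have M_gt1 : (1 < #|M|)%N.
    by rewrite ltn_neqAle eq_sym M_neq1 card_gt0; apply/set0Pn; exists i0.
  (* Weight each nonzero term by its inverse, scaled by [c] for one of them. *)
  set c : 'Z_p := - (#|M|.-1)%:R.
  have uc : c \is a GRing.unit.
    rewrite unitrN unitZpE ?prime_gt1 // prime_coprime //.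
    have /andP[M1_gt0 M1_lt_p] : (0 < #|M|.-1 < p)%N by move: M_gt1 M_le_p; lia.
    by apply/negP => /(dvdn_leq M1_gt0); rewrite leqNgt M1_lt_p.
  have uM i : i \in M -> u i \is a GRing.unit.
    by rewrite Zp_prime_unitE // => /setIP[_]; rewrite inE.
  exists (fun i => if i \in M then (if i == i0 then c else 1) / u i else 0); split.
  + by move=> i Mi; rewrite Mi unitrM unitrV uM // andbT; case: eqP; rewrite ?unitr1.
  + by move=> i; rewrite inE => /negbTE ->.
  + transitivity (\sum_(i in M) if i == i0 then c else 1).
      rewrite [RHS]big_mkcond; apply: eq_bigr => i _.
      by case: ifP => [/uM/divrK | _]; rewrite ?mul0r.
    rewrite (bigD1 i0) //= eqxx (eq_bigr (fun=> 1)) => [|i /andP[_ /negbTE -> //]].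
    rewrite sumr_const (eq_card (B := M :\ i0)) => [|i]; last by rewrite in_setD1 [RHS]andbC.
    by rewrite /c (cardsD1 i0 M) Mi0 add1n addNr.
- by apply: wzs_on_zero => [|i /setDP[_]]; rewrite ?unitr1 // inE negbK => /eqP.
Qed.

Lemma legendre_eq1 (a q : nat) : prime q -> ~~ (q %| a)%N ->
  (legendre a q == 1) = ((a%:R : 'Z_q) \in Qset q).
Proof.
move=> q_prime q_ndvd_a; have q_gt1 := prime_gt1 q_prime.
rewrite /legendre (negbTE q_ndvd_a); case: ifP => [/existsP[x /eqP xx] | nsq].
  apply/esym/QsetP; exists (x : nat)%:R.
    rewrite unitZpE // prime_coprime //; apply: contra q_ndvd_a => q_dvd_x.
    by rewrite /dvdn -xx; apply: dvdn_mulr.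
  by rewrite -natrX -mulnn -(Zp_nat_mod q_gt1 (x * x)) xx Zp_nat_mod.
apply/esym/negbTE/QsetP => -[s _ a_s2]; move/negbT/negP: nsq; apply; apply/existsP.
exists (Ordinal (ltn_Zp q_gt1 s)); apply/eqP => /=.
by rewrite -!(val_Zp_nat q_gt1) natrM Zp_natK // -expr2 -a_s2.
Qed.

Section LSet.
Variables p q : nat.
Hypotheses (p_prime : prime p) (q_prime : prime q) (p_neq_q : p != q).

Let p_gt1 : (1 < p)%N. Proof. exact: prime_gt1. Qed.
Let q_gt1 : (1 < q)%N. Proof. exact: prime_gt1. Qed.
Let pq_gt1 : (1 < p * q)%N. Proof. by rewrite (leq_trans p_gt1) // leq_pmulr // ltnW. Qed.
Let q_dvd_pq : (q %| p * q)%N. Proof. exact: dvdn_mull. Qed.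

Lemma jacobi_primeM (a : nat) : jacobi a (p * q) = legendre a p * legendre a q.
Proof.
have primes_pq : perm_eq (primes (p * q)) [:: p; q].
  apply: uniq_perm; rewrite ?primes_uniq //= ?inE ?andbT //.
  move=> r; rewrite mem_primes !inE muln_gt0 !prime_gt0 //=.
  apply/idP/orP => [/andP[r_prime]|[] /eqP->].
  - by rewrite Euclid_dvdM // !dvdn_prime2 // => /orP.
  - by rewrite p_prime dvdn_mulr.
  - by rewrite q_prime dvdn_mull.
rewrite /jacobi (perm_big _ primes_pq) /= !big_cons big_nil mulr1.
by rewrite !lognM ?prime_gt0 // !logn_prime // !eqxx (negbTE p_neq_q) eq_sym (negbTE p_neq_q).
Qed.

Lemma L_setE (x : 'Z_(p * q)) :
  (x \in L_set (p * q) p) = (x \is a GRing.unit) && (redmod (p * q) q x \in Qset q).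
Proof.
rewrite inE; case ux: (x \is a GRing.unit) => //=.
have co_x : coprime (p * q) x by rewrite -unitZpE // Zp_natK.
have co_p : ~~ (p %| x)%N by rewrite -prime_coprime // (coprime_dvdl _ co_x) ?dvdn_mulr.
have co_q : ~~ (q %| x)%N by rewrite -prime_coprime // (coprime_dvdl _ co_x).
rewrite jacobi_primeM -legendre_eq1 //.
have : legendre x p != 0 by rewrite /legendre (negbTE co_p); case: ifP.
move: (legendre x p) => l nz_l; rewrite -subr_eq0 -{2}[l]mulr1 -mulrBr mulf_eq0 (negbTE nz_l).
by rewrite subr_eq0.
Qed.

Lemma L_set_unit : {subset L_set (p * q) p <= GRing.unit}.
Proof. by move=> x; rewrite L_setE => /andP[]. Qed.

Lemma L_set_redmod x : x \in L_set (p * q) p -> redmod (p * q) q x \in Qset q.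
Proof. by rewrite L_setE => /andP[]. Qed.

Lemma L_set_div : {in L_set (p * q) p &, forall x y, x / y \in L_set (p * q) p}.
Proof.
move=> x y; rewrite !L_setE => /andP[ux Qx] /andP[uy Qy].
by rewrite unitrM ux unitrV uy redmodM // redmodV // rpred_div.
Qed.

Lemma L_set_crt x : redmod (p * q) p x \is a GRing.unit ->
  redmod (p * q) q x \in Qset q -> x \in L_set (p * q) p.
Proof.
move=> up Qq; rewrite L_setE Qq andbT.
exact: (redmod_unit_crt p_gt1 q_gt1 up (Qset_unit Qq)).
Qed.

End LSet.

Lemma cards_neq1 (I : finType) (S : {set I}) a b :
  a != b -> a \in S -> b \in S -> #|S| != 1%N.
Proof. by move=> ab aS bS; rewrite gtn_eqF //; apply/card_gt1P; exists a, b. Qed.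

Section FourTerms.
Variables (q : nat) (v : 'I_4 -> 'Z_q) (N : {set 'I_4}).
Hypotheses (q_prime : prime q) (D3 : davenport_prop (Qset q) 3).

(* [N] stands for the terms that are nonzero modulo p', and [#|T :&: N| != 1] is what
   [wzs_on_units_Zp] needs to balance [T] with unit weights modulo p'. *)
Definition admissible (T : {set 'I_4}) :=
  [/\ T != set0, wzs_on (Qset q) v T & #|T :&: N| != 1%N].

Let Q1 : 1 \in Qset q := rpred1 _.

Let neq_N k l : k \in N -> l \notin N -> k != l.
Proof. by move=> Nk; apply: contraNneq => <-. Qed.

Lemma admissible_disjoint T : T != set0 -> wzs_on (Qset q) v T -> [disjoint T & N] ->
  admissible T.
Proof. by move=> nzT wzsT /disjoint_setI0 TN0; split; rewrite // TN0 cards0. Qed.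

Lemma admissible_of_zero i : v i = 0 -> exists T, admissible T.
Proof.
move=> vi0; have wzs_i : wzs_on (Qset q) v [set i] by apply: wzs_on_zero => // j /set1P ->.
have nz_i : [set i] != set0 by apply/set0Pn; exists i; rewrite set11.
have [Ni | Ni] := boolP (i \in N); last first.
  by exists [set i]; apply: admissible_disjoint; rewrite ?disjoints1.
have [|T sub_T [nzT wzsT]] := davenport_wzs_on v D3 (X := [set~ i]).
  by rewrite cardsC1 card_ord.
case: (eqVneq #|T :&: N| 1%N) => [/eqP/cards1P[j TN] | TN_neq1]; last by exists T.
have /setIP[Tj Nj] : j \in T :&: N by rewrite TN set11.
have iT : i \notin T by apply/negP => /(subsetP sub_T); rewrite !inE eqxx.
exists (i |: T); split.
- by apply/set0Pn; exists i; rewrite setU11.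
- by apply: wzs_onU; rewrite ?disjoints1.
- apply: (cards_neq1 (a := i) (b := j)); rewrite ?inE ?eqxx ?Ni ?Tj ?Nj ?orbT //.
  by apply: contraNneq iT => ->.
Qed.

Section NonzeroTerms.
Hypothesis v_nz : forall i, v i != 0.

Let wzs_on_card_gt1 T : T != set0 -> wzs_on (Qset q) v T -> (1 < #|T|)%N.
Proof.
move=> /set0Pn[i Ti] wzsT; rewrite ltnNge; apply/negP => /card_le1P T1.
suff vi0 : v i = 0 by have := v_nz i; rewrite vi0 eqxx.
apply: (wzs_on_eq0 _ wzsT Ti) => [|j /setD1P[ji]]; first exact: Qset_unit.
by rewrite (T1 i Ti) => /eqP ji'; rewrite ji' eqxx in ji.
Qed.

Let admissible_pair x y : x \in N -> y \in N -> x != y ->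
  wzs_on (Qset q) v [set x; y] -> admissible [set x; y].
Proof.
move=> Nx Ny xy wzs_xy; split=> //; first by apply/set0Pn; exists x; rewrite set21.
by apply: (cards_neq1 xy); rewrite inE ?set21 ?set22.
Qed.

Let admissible_two_pairs x y z w : x \in N -> y \in N -> x != y ->
  z \notin N -> w \notin N -> z != w ->
  wzs_on (Qset q) v [set x; z] -> wzs_on (Qset q) v [set y; w] ->
  admissible ([set x; z] :|: [set y; w]).
Proof.
move=> Nx Ny xy Nz Nw zw wzs_xz wzs_yw.
split; first by apply/set0Pn; exists x; rewrite !inE eqxx.
  apply: wzs_onU => //; rewrite disjoints_subset; apply/subsetP => k.
  rewrite !inE negb_or => /orP[] /eqP ->; first by rewrite xy neq_N.
  by rewrite zw andbT eq_sym neq_N.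
by apply: (cards_neq1 xy); rewrite !inE ?eqxx ?orbT ?Nx ?Ny.
Qed.

Section TwoTermsOffN.
Variables a b c d : 'I_4.
Hypotheses (ab : a != b) (cd : c != d) (Nab : N = [set a; b]) (Ncd : ~: N = [set c; d]).

Let pair_or e : e \notin N ->
  (exists T, admissible T) \/ wzs_on (Qset q) v [set a; e] \/ wzs_on (Qset q) v [set b; e].
Proof.
move=> Ne; have [|T sub_T [nzT wzsT]] := davenport_wzs_on v D3 (X := e |: N).
  by rewrite cardsU1 Ne Nab cards2 ab.
case: (eqVneq #|T :&: N| 1%N) => [/eqP/cards1P[x TN] | TN_neq1]; last by left; exists T.
have /setIP[Tx Nx] : x \in T :&: N by rewrite TN set11.
suff Txe : T = [set x; e].
  by right; move: Nx wzsT; rewrite Txe Nab => /set2P[] ->; [left | right].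
apply/eqP; rewrite eqEcard cards2 (leq_ltn_trans (leq_b1 _) (wzs_on_card_gt1 nzT wzsT)) andbT.
apply/subsetP => k Tk; case: (boolP (k \in N)) => Nk.
  have : k \in T :&: N by rewrite inE Tk.
  by rewrite TN => /set1P ->; rewrite set21.
by move: (subsetP sub_T k Tk); rewrite !inE (negbTE Nk) orbF => ->; rewrite orbT.
Qed.

Lemma admissible_two_off : exists T, admissible T.
Proof.
have Na : a \in N by rewrite Nab set21.
have Nb : b \in N by rewrite Nab set22.
have Nc : c \notin N by rewrite -in_setC Ncd set21.
have Nd : d \notin N by rewrite -in_setC Ncd set22.
have pairQ x y : x != y -> wzs_on (Qset q) v [set x; y] <-> - (v x * v y) \in Qset q.
  by move=> xy; apply: wzs_on_pair_Qset.
case: (boolP (- (v c * v d) \in Qset q)) => [Qcd | nQcd].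
  exists [set c; d]; apply: admissible_disjoint.
  - by apply/set0Pn; exists c; rewrite set21.
  - exact/(pairQ _ _ cd).
  - by rewrite -Ncd disjoints_subset.
have same_partner x y : x \in N -> y \in N -> x != y ->
    wzs_on (Qset q) v [set x; c] -> wzs_on (Qset q) v [set x; d] -> exists T, admissible T.
  move=> Nx Ny xy /(pairQ _ _ (neq_N Nx Nc)) Qxc xd.
  have /(pairQ _ _ (neq_N Nx Nd)) Qxd := xd.
  have dc : d != c by rewrite eq_sym.
  have [Qyc | Qxy] := oppM_Qset_cases q_prime (v_nz y) Qxc Qxd nQcd.
    exists ([set y; c] :|: [set x; d]); apply: admissible_two_pairs; rewrite 1?eq_sym //.
    exact/(pairQ _ _ (neq_N Ny Nc)).
  by exists [set x; y]; apply: admissible_pair => //; apply/(pairQ _ _ xy).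
have [|[ac | bc]] := pair_or Nc; have [|[ad | bd]] := pair_or Nd => //.
- exact: (same_partner a b).
- by exists ([set a; c] :|: [set b; d]); apply: admissible_two_pairs.
- by exists ([set b; c] :|: [set a; d]); apply: admissible_two_pairs; rewrite // eq_sym.
- by apply: (same_partner b a); rewrite // eq_sym.
Qed.

End TwoTermsOffN.

Lemma admissible_of_nonzero : exists T, admissible T.
Proof.
have cardNC : (#|N| + #|~: N| = 4)%N by rewrite cardsC card_ord.
have [N_lt2 | N_gt2 | /eqP/cards2P[a [b [ab Nab]]]] := ltngtP #|N| 2.
- have [|T sub_T [nzT wzsT]] := davenport_wzs_on v D3 (X := ~: N).
    by rewrite -(leq_add2l #|N|) cardNC; move: N_lt2; lia.
  by exists T; apply: admissible_disjoint; rewrite // disjoints_subset.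
- have [|T sub_T [nzT wzsT]] := davenport_wzs_on v D3 (X := N); first exact: N_gt2.
  by exists T; split; rewrite // (setIidPl sub_T) gtn_eqF // wzs_on_card_gt1.
- have /cards2P[c [d [cd Ncd]]] : #|~: N| == 2.
    by rewrite -(eqn_add2l #|N|) cardNC Nab cards2 ab.
  exact: admissible_two_off ab cd Nab Ncd.
Qed.

End NonzeroTerms.

Lemma exists_admissible : exists T, admissible T.
Proof.
case: (pickP (fun i => v i == 0)) => [i /eqP vi0 | v_nz]; first exact: admissible_of_zero vi0.
by apply: admissible_of_nonzero => i; rewrite v_nz.
Qed.

End FourTerms.

Lemma davenport_L_set4 p q : prime p -> prime q -> p != q -> (4 <= p)%N ->
  davenport_prop (Qset q) 3 -> davenport_prop (L_set (p * q) p) 4.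
Proof.
move=> p_prime q_prime p_neq_q p_ge4 D3 s /eqP size_s.
have [p_gt1 q_gt1] := (prime_gt1 p_prime, prime_gt1 q_prime).
have pq_gt1 : (1 < p * q)%N by rewrite (leq_trans p_gt1) // leq_pmulr // ltnW.
have co_pq : coprime p q by rewrite prime_coprime // dvdn_prime2.
pose t := Tuple size_s; rewrite -[s]/(tval t); apply/has_wzs_subseq_tupleP.
pose u := redmod (p * q) p \o tnth t; pose v := redmod (p * q) q \o tnth t.
have [T [nzT wzsT TN]] := exists_admissible v [set i | u i != 0] q_prime D3.
exists T => //; apply: (wzs_on_crt p_gt1 q_gt1 co_pq (L_set_crt p_prime q_prime p_neq_q)) wzsT.
apply: wzs_on_units_Zp => //; apply: leq_trans p_ge4.
by apply: leq_trans (max_card _) _; rewrite card_ord.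
Qed.


Lemma L_set_no_wzs p q (Y : 3.-tuple 'Z_(p * q)) : prime p -> prime q -> p != q ->
  ~ has_wzs_subseq (Qset q)
      [:: redmod (p * q) q (tnth Y (inord 1)); redmod (p * q) q (tnth Y (inord 2))] ->
  (q %| tnth Y ord0)%N /\ tnth Y ord0 != 0 \/
  [/\ coprime p (tnth Y ord0), ~~ coprime p (tnth Y (inord 1))
     & ~~ coprime p (tnth Y (inord 2))] ->
  ~ has_wzs_subseq (L_set (p * q) p) Y.
Proof.
move=> p_prime q_prime p_neq_q noQ hY /has_wzs_subseq_tupleP[T nzT wzsT].
have [p_gt1 q_gt1] := (prime_gt1 p_prime, prime_gt1 q_prime).
have pq_gt1 : (1 < p * q)%N by rewrite (leq_trans p_gt1) // leq_pmulr // ltnW.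
have wzsQ := wzs_on_redmod pq_gt1 q_gt1 (dvdn_mull _ (dvdnn q))
  (L_set_redmod p_prime q_prime p_neq_q) wzsT.
have L_unit := L_set_unit p_prime q_prime p_neq_q.
case: hY => [[q_dvd_y0 nz_y0] | [co_y0 nco_y1 nco_y2]].
  have y0_q : redmod (p * q) q (tnth Y ord0) = 0 by apply/eqP; rewrite redmod_eq0.
  have [T0 | nzT0] := eqVneq (T :\ ord0) set0; last first.
    apply: noQ (wzs_on_tail nzT0 _ (wzs_on_setD1 _ wzsQ)) => //; by rewrite setD11.
  have T_0 : ord0 \in T.
    case/set0Pn: nzT => j Tj; case: (eqVneq j ord0) => [<- // | nj0].
    have : j \in T :\ ord0 by rewrite !inE nj0.
    by rewrite T0 inE.
  move/negP: nz_y0; apply; apply/eqP.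
  by apply: (wzs_on_eq0 L_unit wzsT T_0) => j; rewrite T0 inE.
have nT0 : ord0 \notin T.
  apply/negP => T_0; move: co_y0; rewrite prime_coprime // -(redmod_eq0 p_gt1) => /negP; apply.
  have L_unit_p x : x \in L_set (p * q) p -> redmod (p * q) p x \is a GRing.unit.
    by move=> /L_unit /(redmod_unit pq_gt1 p_gt1 (dvdn_mulr _ (dvdnn p))).
  have wzsP := wzs_on_redmod pq_gt1 p_gt1 (dvdn_mulr _ (dvdnn p)) L_unit_p wzsT.
  apply/eqP/(wzs_on_eq0 (fun _ u => u) wzsP T_0) => j /setD1P[nj0 _] /=.
  apply/eqP; rewrite redmod_eq0 //; apply/negbNE; rewrite -prime_coprime //.
  by case: (ord3_neq0 nj0) => ->.
exact: noQ (wzs_on_tail nzT nT0 wzsQ).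
Qed.

Local Close Scope ring_scope.

Theorem theorem5p6 (p' q n : nat) :
  prime p' -> prime q -> p' != q -> 7 <= p' -> 7 <= q -> n = p' * q ->
  forall S : 3.-tuple 'Z_n,
  (exists Y : 3.-tuple 'Z_n,
     equiv_wrt (L_set n p') S Y /\
     let y1 := tnth Y ord0 in
     let y2 := tnth Y (inord 1) in
     let y3 := tnth Y (inord 2) in
     ([/\ q %| y1, ~~ (q %| y2), ~~ (q %| y3), y1 != 0%R &
          extremal (Qset q) [:: redmod n q y2; redmod n q y3]]
      \/
      [/\ coprime p' y1, ~~ coprime p' y2, ~~ coprime p' y3 &
          extremal (Qset q) [:: redmod n q y2; redmod n q y3]])) ->
  extremal (L_set n p') S.
Proof.
move=> p_prime q_prime p_neq_q p_ge7 _ -> S [Y [SY hY]].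
have [extQ Y_cases] : extremal (Qset q)
    [:: redmod (p' * q) q (tnth Y (inord 1)); redmod (p' * q) q (tnth Y (inord 2))] /\
  ((q %| tnth Y ord0) /\ tnth Y ord0 != 0%R \/
   [/\ coprime p' (tnth Y ord0), ~~ coprime p' (tnth Y (inord 1))
     & ~~ coprime p' (tnth Y (inord 2))]).
  by case: hY => [[? _ _ ? ?] | [? ? ? ?]]; split=> //; [left | right].
apply: (davenport_extremal (k := 3)) (size_tuple S) _.
  apply: davenport_L_set4 (extremal_davenport extQ) => //.
  exact: leq_trans p_ge7.
have L_unit := L_set_unit p_prime q_prime p_neq_q.
move=> /(equiv_wrt_has_wzs L_unit (L_set_div p_prime q_prime p_neq_q) SY).
by apply: L_set_no_wzs Y_cases => //; case: extQ => k [].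
Qed.
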